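(* Let $|\Psi_{in}\rangle=\frac1{\sqrt d}\sum_{i=1}^d|A_i\rangle|B_i\rangle$ with orthonormal sets $\{|A_i\rangle\}\subset\mathcal H_A$, $\{|B_i\rangle\}\subset\mathcal H_B$, and $|\Psi_{out}\rangle=\frac1{\sqrt d}\sum_{i=1}^d|a_i\rangle|b_i\rangle$ with orthonormal bases $\{|a_i\rangle\}$ of $\mathcal H_a$ and $\{|b_i\rangle\}$ of $\mathcal H_b$, $\dim\mathcal H_a=\dim\mathcal H_b=d$. Let $E_k:\mathcal H_A\to\mathcal H_a$ and $F_k:\mathcal H_B\to\mathcal H_b$ be linear operators with $\sum_k E_k^\dagger E_k\otimes F_k^\dagger F_k=\mathbb I_{AB}$ and $(E_k\otimes F_k)|\Psi_{in}\rangle=\sqrt{p_k}|\Psi_{out}\rangle$ for all $k$, where $p_k\ge0$. Then for every $k$ with $p_k\neq0$ there exist $\alpha_k>0$ and a $d\times d$ unitary matrix $U_k^M$ such that $E_k^M=\alpha_kU_k^M$ and $F_k^M=\frac{\sqrt{p_k}}{\alpha_k}\overline{U_k^M}$, where $(E_k^M)_{ij}=\langle a_i|E_k|A_j\rangle$, $(F_k^M)_{ij}=\langle b_i|F_k|B_j\rangle$ and the bar denotes entrywise complex conjugation.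
   Context: All Hilbert spaces are finite-dimensional; $\dim\mathcal H_A,\dim\mathcal H_B\ge d$. *)

(* Finite-dimensional Hilbert spaces are modelled in coordinates:
   H_A = C^nA, H_B = C^nB, H_a = H_b = C^d, with the standard inner product
   <u|v> = u^* v, over an arbitrary numClosedFieldType C with conjugation Num.conj. *)
From HB Require Import structures.
From mathcomp Require Import all_boot all_order all_algebra.
From mathcomp Require Import spectral.
From mathcomp Require Import mxtens.

Set Implicit Arguments.
Unset Strict Implicit.
Unset Printing Implicit Defensive.

Import Order.TTheory GRing.Theory Num.Theory.
Local Open Scope ring_scope.

Definition hadjmx (C : numClosedFieldType) (m n : nat) (M : 'M[C]_(m, n)) : 'M[C]_(n, m) :=
  (map_mx Num.conj M)^T.

Definition entconjmx (C : numClosedFieldType) (m n : nat) (M : 'M[C]_(m, n)) : 'M[C]_(m, n) :=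
  map_mx Num.conj M.

(* The maximally entangled-type vector (1/sqrt d) sum_i X_i (x) Y_i, where X_i, Y_i are
   the i-th columns of X and Y; the result lives in C^(m*n) = C^m (x) C^n via tensmx. *)
Definition ent_state (C : numClosedFieldType) (d m n : nat)
  (X : 'M[C]_(m, d)) (Y : 'M[C]_(n, d)) : 'cV[C]_(m * n) :=
  (sqrtC (d%:R))^-1 *: \sum_(i < d) (col i X *t col i Y).

From HB Require Import structures.
From mathcomp Require Import all_boot all_order all_algebra.
From mathcomp Require Import spectral mxtens.
From mathcomp Require Import ring.
Import Order.TTheory GRing.Theory Num.Theory.
Local Open Scope ring_scope.
Set Implicit Arguments.
Unset Strict Implicit.

(* Write M_k = a^† E_k A and N_k = b^† F_k B.  Reading the state equation
   coefficientwise gives M_k N_k^T = sqrt p_k, and the completeness relation,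
   applied to the input state, gives sum_k p_k = 1 and
   sum_k |M_k|^2 |N_k|^2 = tr(A A^†) tr(B B^†) = d^2 for the Frobenius norm.
   Cauchy-Schwarz for the pairing tr(M_k N_k^T) = d sqrt p_k bounds each term
   below by d^2 p_k; these bounds also add up to d^2, so all are attained.
   Equality in Cauchy-Schwarz makes N_k^T proportional to M_k^†, so M_k M_k^†
   is a positive scalar: M_k = alpha_k U_k with U_k unitary, and N_k is then
   (sqrt p_k / alpha_k) times the entrywise conjugate of U_k. *)

Section Adjoint.
Variable C : numClosedFieldType.

Lemma hadjD m n (X Y : 'M[C]_(m, n)) : hadjmx (X + Y) = hadjmx X + hadjmx Y.
Proof. by apply/matrixP => i j; rewrite !mxE rmorphD. Qed.

Lemma hadjN m n (X : 'M[C]_(m, n)) : hadjmx (- X) = - hadjmx X.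
Proof. by apply/matrixP => i j; rewrite !mxE rmorphN. Qed.

Lemma hadjZ m n c (X : 'M[C]_(m, n)) : hadjmx (c *: X) = c^* *: hadjmx X.
Proof. by apply/matrixP => i j; rewrite !mxE rmorphM. Qed.

Lemma hadj_sum m n (I : finType) (f : I -> 'M[C]_(m, n)) :
  hadjmx (\sum_i f i) = \sum_i hadjmx (f i).
Proof.
apply: (big_morph _ (@hadjD m n)).
by apply/matrixP => i j; rewrite !mxE rmorph0.
Qed.

Lemma hadjM m n p (X : 'M[C]_(m, n)) (Y : 'M[C]_(n, p)) :
  hadjmx (X *m Y) = hadjmx Y *m hadjmx X.
Proof. by rewrite /hadjmx map_mxM trmx_mul. Qed.

Lemma hadjK m n (X : 'M[C]_(m, n)) : hadjmx (hadjmx X) = X.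
Proof. by apply/matrixP => i j; rewrite !mxE conjCK. Qed.

Lemma hadj_tens m n p q (X : 'M[C]_(m, n)) (Y : 'M[C]_(p, q)) :
  hadjmx (X *t Y) = hadjmx X *t hadjmx Y.
Proof. by rewrite /hadjmx map_mxT trmx_tens. Qed.

Lemma hadj_trmx m n (X : 'M[C]_(m, n)) : hadjmx X^T = (hadjmx X)^T.
Proof. by apply/matrixP => i j; rewrite !mxE. Qed.

Lemma trmx_hadj m n (X : 'M[C]_(m, n)) : (hadjmx X)^T = entconjmx X.
Proof. exact: trmxK. Qed.

Lemma entconjZ m n c (X : 'M[C]_(m, n)) : entconjmx (c *: X) = c^* *: entconjmx X.
Proof. by apply/matrixP => i j; rewrite !mxE rmorphM. Qed.

Lemma mxtrace_hadj n (X : 'M[C]_n) : \tr (hadjmx X) = (\tr X)^*.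
Proof. by rewrite mxtrace_tr /mxtrace rmorph_sum; apply: eq_bigr => i _; rewrite mxE. Qed.

Lemma hadj_col m n p (X : 'M[C]_(m, n)) (Y : 'M[C]_(m, p)) i j :
  hadjmx (col i X) *m col j Y = ((hadjmx X *m Y) i j)%:M.
Proof.
apply/matrixP => r s; rewrite [r]ord1 [s]ord1 !mxE /= mulr1n.
by apply: eq_bigr => k _; rewrite !mxE.
Qed.

Lemma unitarymx_hadj m n (X : 'M[C]_(m, n)) :
  (X \is unitarymx) = (X *m hadjmx X == 1%:M).
Proof. by rewrite qualifE /hadjmx map_trmx. Qed.

End Adjoint.

Section Tensor.
Variable R : comPzRingType.

Lemma mxtrace_tens m n (X : 'M[R]_m) (Y : 'M[R]_n) : \tr (X *t Y) = \tr X * \tr Y.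
Proof. by rewrite /mxtrace mulr_sum; apply: eq_bigr => i _; rewrite !mxE. Qed.

Lemma tens_scalar_mx11 (x y : R) : (x%:M : 'M_1) *t (y%:M : 'M_1) = (x * y)%:M.
Proof.
apply/matrixP => r s; rewrite !mxE.
rewrite !(ord1 (mxtens_unindex _).1) !(ord1 (mxtens_unindex _).2) !eqxx !mulr1n.
by rewrite [r]ord1 [s]ord1 eqxx mulr1n.
Qed.

End Tensor.

Section Frobenius.
Variable C : numClosedFieldType.

Definition frobenius_sq m n (X : 'M[C]_(m, n)) : C := \tr (hadjmx X *m X).

Lemma frobenius_sqE m n (X : 'M[C]_(m, n)) :
  frobenius_sq X = \sum_i \sum_j `|X j i| ^+ 2.
Proof.
rewrite /frobenius_sq /mxtrace; apply: eq_bigr => i _; rewrite mxE.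
by apply: eq_bigr => j _; rewrite !mxE normCK mulrC.
Qed.

Lemma frobenius_sq_ge0 m n (X : 'M[C]_(m, n)) : 0 <= frobenius_sq X.
Proof. by rewrite frobenius_sqE; do 2![apply: sumr_ge0 => ? _]; exact: exprn_ge0. Qed.

Lemma frobenius_sq_eq0 m n (X : 'M[C]_(m, n)) : (frobenius_sq X == 0) = (X == 0).
Proof.
apply/eqP/eqP => [|->]; last by rewrite /frobenius_sq mulmx0 linear0.
rewrite frobenius_sqE => /eqP; rewrite psumr_eq0 => [/allP X0|i _]; last first.
  by apply: sumr_ge0 => j _; exact: exprn_ge0.
apply/matrixP => j i; move/implyP: (X0 i (mem_index_enum i)) => /(_ isT).
rewrite psumr_eq0 => [/allP/(_ j (mem_index_enum j))|k _]; last exact: exprn_ge0.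
by rewrite expf_eq0 /= normr_eq0 !mxE => /eqP.
Qed.

Lemma frobenius_sq_trmx m n (X : 'M[C]_(m, n)) : frobenius_sq X^T = frobenius_sq X.
Proof. by rewrite /frobenius_sq hadj_trmx -trmx_mul mxtrace_tr mxtrace_mulC. Qed.

Lemma frobenius_sq_hadj_unitary n k (U : 'M[C]_n) (X : 'M[C]_(n, k)) :
  hadjmx U *m U = 1%:M -> frobenius_sq (hadjmx U *m X) = frobenius_sq X.
Proof.
move=> /mulmx1C UU; rewrite /frobenius_sq hadjM hadjK.
by rewrite mulmxA -(mulmxA _ U) UU mulmx1.
Qed.

Lemma frobenius_sq_mulmx m n k (X : 'M[C]_(m, n)) (Y : 'M[C]_(n, k)) :
  frobenius_sq (X *m Y) = \tr ((Y *m hadjmx Y) *m (hadjmx X *m X)).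
Proof. by rewrite /frobenius_sq hadjM mulmxA -(mulmxA _ (hadjmx X)) mxtrace_mulC !mulmxA. Qed.

(* Lagrange-type identity: the right factor is the Cauchy-Schwarz defect. *)
Lemma frobenius_sq_cauchy_schwarz m n (X : 'M[C]_(m, n)) (Y : 'M[C]_(n, m)) :
  frobenius_sq (frobenius_sq X *: Y - \tr (X *m Y) *: hadjmx X) =
  frobenius_sq X * (frobenius_sq X * frobenius_sq Y - `|\tr (X *m Y)| ^+ 2).
Proof.
set s := frobenius_sq X; set w := \tr (X *m Y).
have sJ : s^* = s by rewrite geC0_conj // frobenius_sq_ge0.
have trYX : \tr (hadjmx Y *m hadjmx X) = w^* by rewrite -hadjM mxtrace_hadj.
rewrite /frobenius_sq hadjD hadjN !hadjZ sJ hadjK normCK.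
rewrite mulmxDl !mulmxDr !mulNmx !mulmxN -!scalemxAl -!scalemxAr.
rewrite -!scaleN1r !mxtraceD !mxtraceZ trYX -/w -/s.
rewrite [\tr (X *m hadjmx X)]mxtrace_mulC -/s.
ring.
Qed.

Lemma cauchy_schwarz_mxtrace m n (X : 'M[C]_(m, n)) (Y : 'M[C]_(n, m)) :
  `|\tr (X *m Y)| ^+ 2 <= frobenius_sq X * frobenius_sq Y.
Proof.
have [X0|sX] := eqVneq (frobenius_sq X) 0.
  rewrite X0 mul0r; move/eqP: X0; rewrite frobenius_sq_eq0 => /eqP->.
  by rewrite mul0mx linear0 normr0 expr0n.
have s_gt0 : 0 < frobenius_sq X by rewrite lt_def sX frobenius_sq_ge0.
rewrite -subr_ge0 -(pmulr_rge0 _ s_gt0) -frobenius_sq_cauchy_schwarz.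
exact: frobenius_sq_ge0.
Qed.

Lemma cauchy_schwarz_mxtrace_eq m n (X : 'M[C]_(m, n)) (Y : 'M[C]_(n, m)) :
  `|\tr (X *m Y)| ^+ 2 = frobenius_sq X * frobenius_sq Y ->
  frobenius_sq X *: Y = \tr (X *m Y) *: hadjmx X.
Proof.
move=> eqXY; apply/eqP; rewrite -subr_eq0 -frobenius_sq_eq0.
by rewrite frobenius_sq_cauchy_schwarz eqXY subrr mulr0.
Qed.

End Frobenius.

Section EntangledVector.
Variable C : numClosedFieldType.

Definition ent_vec d m n (X : 'M[C]_(m, d)) (Y : 'M[C]_(n, d)) : 'cV[C]_(m * n) :=
  \sum_(i < d) (col i X *t col i Y).

Lemma ent_stateE d m n (X : 'M[C]_(m, d)) (Y : 'M[C]_(n, d)) :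
  ent_state X Y = (sqrtC d%:R)^-1 *: ent_vec X Y.
Proof. by []. Qed.

Lemma ent_vecZ d m n c (X : 'M[C]_(m, d)) (Y : 'M[C]_(n, d)) :
  c *: ent_vec X Y = ent_vec (c *: X) Y.
Proof.
rewrite /ent_vec scaler_sumr; apply: eq_bigr => i _.
by apply/matrixP => r s; rewrite !mxE mulrA.
Qed.

Lemma tensmx_mul_ent_vec d m n m' n' (E : 'M[C]_(m', m)) (F : 'M[C]_(n', n))
    (X : 'M[C]_(m, d)) (Y : 'M[C]_(n, d)) :
  (E *t F) *m ent_vec X Y = ent_vec (E *m X) (F *m Y).
Proof.
rewrite /ent_vec mulmx_sumr; apply: eq_bigr => i _.
by rewrite (@tensmx_mul C m' m n' n 1 1) !colE !mulmxA.
Qed.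

Lemma ent_vec_tens_index d m n (X : 'M[C]_(m, d)) (Y : 'M[C]_(n, d)) r s j :
  ent_vec X Y (mxtens_index (r, s)) j = (X *m Y^T) r s.
Proof.
rewrite /ent_vec summxE !mxE; apply: eq_bigr => i _.
by rewrite !mxE mxtens_indexK.
Qed.

Lemma ent_vec_inj d m n (X X' : 'M[C]_(m, d)) (Y Y' : 'M[C]_(n, d)) :
  ent_vec X Y = ent_vec X' Y' -> X *m Y^T = X' *m Y'^T.
Proof. by move=> eqXY; apply/matrixP => r s; rewrite -!(ent_vec_tens_index _ _ _ _ 0) eqXY. Qed.

Lemma hadj_ent_vec_mul d m n (X X' : 'M[C]_(m, d)) (Y Y' : 'M[C]_(n, d)) :
  hadjmx (ent_vec X Y) *m ent_vec X' Y' =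
  (\sum_i \sum_j ((hadjmx X *m X') i j * (hadjmx Y *m Y') i j))%:M.
Proof.
rewrite /ent_vec hadj_sum mulmx_suml raddf_sum; apply: eq_bigr => i _.
rewrite mulmx_sumr raddf_sum; apply: eq_bigr => j _.
rewrite (hadj_tens (col i X) (col i Y)) (@tensmx_mul C 1 m 1 n 1 1).
by rewrite !hadj_col tens_scalar_mx11.
Qed.

Lemma hadj_ent_vec_orthonormal d m n (X : 'M[C]_(m, d)) (Y : 'M[C]_(n, d)) :
  hadjmx X *m X = 1%:M -> hadjmx Y *m Y = 1%:M ->
  hadjmx (ent_vec X Y) *m ent_vec X Y = (d%:R)%:M.
Proof.
move=> XX YY; rewrite hadj_ent_vec_mul XX YY; congr _%:M.
rewrite -[d in RHS]card_ord -sumr_const; apply: eq_bigr => i _.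
rewrite (bigD1 i) //= big1 => [|j /negbTE ji]; first by rewrite !mxE eqxx mulr1 addr0.
by rewrite !mxE eq_sym ji mulr0.
Qed.

Lemma tensmx_mul_ent_state d m n m' n' (E : 'M[C]_(m', m)) (F : 'M[C]_(n', n))
    (X : 'M[C]_(m, d)) (Y : 'M[C]_(n, d)) :
  (E *t F) *m ent_state X Y = ent_state (E *m X) (F *m Y).
Proof. by rewrite !ent_stateE -scalemxAr tensmx_mul_ent_vec. Qed.

Lemma ent_stateZ d m n c (X : 'M[C]_(m, d)) (Y : 'M[C]_(n, d)) :
  c *: ent_state X Y = ent_state (c *: X) Y.
Proof. by rewrite !ent_stateE scalerA mulrC -scalerA ent_vecZ. Qed.

Lemma ent_state_inj d m n (X X' : 'M[C]_(m, d)) (Y Y' : 'M[C]_(n, d)) :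
  (0 < d)%N -> ent_state X Y = ent_state X' Y' -> X *m Y^T = X' *m Y'^T.
Proof.
move=> d_gt0; rewrite !ent_stateE => /scalerI eqXY; apply: ent_vec_inj; apply: eqXY.
by rewrite invr_eq0 sqrtC_eq0 pnatr_eq0 -lt0n.
Qed.

Lemma hadj_ent_state_orthonormal d m n (X : 'M[C]_(m, d)) (Y : 'M[C]_(n, d)) :
  (0 < d)%N -> hadjmx X *m X = 1%:M -> hadjmx Y *m Y = 1%:M ->
  hadjmx (ent_state X Y) *m ent_state X Y = 1%:M.
Proof.
move=> d_gt0 XX YY; rewrite ent_stateE; set c := (sqrtC d%:R)^-1.
have cJ : c^* = c by rewrite geC0_conj // invr_ge0 sqrtC_ge0 ler0n.
rewrite hadjZ cJ -scalemxAl -scalemxAr hadj_ent_vec_orthonormal //.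
rewrite scalerA scale_scalar_mx -invfM -expr2 sqrtCK mulVf //.
by rewrite pnatr_eq0 -lt0n.
Qed.

End EntangledVector.

Section ScaledUnitary.
Variable C : numClosedFieldType.

Lemma scale_unitarymx_of_mulmx_hadj m n (X : 'M[C]_(m, n)) (c : C) :
  0 < c -> X *m hadjmx X = c%:M -> (sqrtC c)^-1 *: X \is unitarymx.
Proof.
move=> c_gt0 XX; have cJ : (sqrtC c)^-1^* = (sqrtC c)^-1.
  by rewrite geC0_conj // invr_ge0 sqrtC_ge0 ltW.
rewrite unitarymx_hadj hadjZ cJ -scalemxAl -scalemxAr XX scalerA scale_scalar_mx.
by rewrite -invfM -expr2 sqrtCK mulVf ?gt_eqF.
Qed.

(* Equality in Cauchy-Schwarz makes [Y^T] proportional to [hadjmx X], so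
   [X *m Y^T = q%:M] forces [X *m hadjmx X] to be a positive scalar. *)
Lemma scaled_unitary_of_cauchy_schwarz_eq d (X Y : 'M[C]_d) (q : C) :
  (0 < d)%N -> 0 < q -> X *m Y^T = q%:M ->
  frobenius_sq X * frobenius_sq Y = (q * d%:R) ^+ 2 ->
  exists (alpha : C) (U : 'M[C]_d), [/\ 0 < alpha, U \is unitarymx,
    X = alpha *: U & Y = (q / alpha) *: entconjmx U].
Proof.
move=> d_gt0 q_gt0 XY eqCS; set s := frobenius_sq X in eqCS *.
have d_neq0 : d%:R != 0 :> C by rewrite pnatr_eq0 -lt0n.
have qd_gt0 : 0 < q * d%:R by rewrite mulr_gt0 // ltr0n.
have trXY : \tr (X *m Y^T) = q * d%:R by rewrite XY mxtrace_scalar mulr_natr.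
have s_gt0 : 0 < s.
  rewrite lt_def frobenius_sq_ge0 andbT; apply/eqP => s0.
  by move/eqP: eqCS; rewrite s0 mul0r eq_sym expf_eq0 /= gt_eqF.
have YT : s *: Y^T = (q * d%:R) *: hadjmx X.
  rewrite -trXY; apply: cauchy_schwarz_mxtrace_eq.
  by rewrite trXY ger0_norm ?ltW // frobenius_sq_trmx eqCS.
have XX : X *m hadjmx X = (s / d%:R)%:M.
  apply: (scalerI (lt0r_neq0 qd_gt0)).
  rewrite scalemxAr -YT -scalemxAr XY !scale_scalar_mx; congr _%:M; field.
  exact: d_neq0.
pose alpha := sqrtC (s / d%:R).
have alpha_gt0 : 0 < alpha by rewrite sqrtC_gt0 divr_gt0 // ltr0n.
have s_alpha : s = alpha ^+ 2 * d%:R by rewrite sqrtCK divfK.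
exists alpha, (alpha^-1 *: X); split => //.
- by apply: scale_unitarymx_of_mulmx_hadj XX; rewrite divr_gt0 // ltr0n.
- by rewrite scalerA divff ?gt_eqF // scale1r.
have -> : Y = (Y^T)^T by rewrite trmxK.
have -> : Y^T = (q * d%:R / s) *: hadjmx X.
  apply: (scalerI (lt0r_neq0 s_gt0)); rewrite YT scalerA; congr (_ *: _).
  by field; rewrite gt_eqF.
rewrite linearZ /= trmx_hadj entconjZ geC0_conj ?invr_ge0 ?ltW // scalerA.
by congr (_ *: _); rewrite s_alpha; field; rewrite d_neq0 gt_eqF.
Qed.

End ScaledUnitary.

Section KrausOperators.
Variable C : numClosedFieldType.
Variables (d nA nB : nat) (K : finType).
Variables (A : 'M[C]_(nA, d)) (B : 'M[C]_(nB, d)) (a b : 'M[C]_d).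
Variables (E : K -> 'M[C]_(d, nA)) (F : K -> 'M[C]_(d, nB)) (p : K -> C).
Hypothesis d_gt0 : (0 < d)%N.
Hypotheses (AA : hadjmx A *m A = 1%:M) (BB : hadjmx B *m B = 1%:M).
Hypotheses (aa : hadjmx a *m a = 1%:M) (bb : hadjmx b *m b = 1%:M).
Hypothesis p_ge0 : forall k, 0 <= p k.
Hypothesis kraus_complete :
  \sum_k ((hadjmx (E k) *m E k) *t (hadjmx (F k) *m F k)) = 1%:M.
Hypothesis kraus_state :
  forall k, (E k *t F k) *m ent_state A B = sqrtC (p k) *: ent_state a b.

Let M k := hadjmx a *m E k *m A.
Let N k := hadjmx b *m F k *m B.

Lemma kraus_mulmx_trmx k : M k *m (N k)^T = (sqrtC (p k))%:M.
Proof.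
have := kraus_state k; rewrite tensmx_mul_ent_state ent_stateZ.
move=> /(ent_state_inj d_gt0) EAFB.
have -> : M k *m (N k)^T = hadjmx a *m (E k *m A *m (F k *m B)^T) *m (hadjmx b)^T.
  by rewrite /M /N !trmx_mul !mulmxA.
rewrite EAFB -!scalemxAl -scalemxAr -scalemxAl mulmxA aa mul1mx -trmx_mul bb.
by rewrite trmx1 scalemx1.
Qed.

Lemma kraus_prob_sum_eq1 : \sum_k p k = 1.
Proof.
have norm_k k : hadjmx (ent_state A B) *m
    ((hadjmx (E k) *m E k) *t (hadjmx (F k) *m F k)) *m ent_state A B = (p k)%:M.
  rewrite -tensmx_mul -hadj_tens mulmxA -hadjM -mulmxA kraus_state hadjZ.
  rewrite -scalemxAl -scalemxAr hadj_ent_state_orthonormal // scalerA.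
  by rewrite geC0_conj ?sqrtC_ge0 // -expr2 sqrtCK scalemx1.
have : (\sum_k p k)%:M = 1%:M :> 'M[C]_1.
  rewrite raddf_sum -(eq_bigr _ (fun k _ => norm_k k)) -mulmx_suml -mulmx_sumr.
  by rewrite kraus_complete mulmx1 hadj_ent_state_orthonormal.
by move/matrixP/(_ 0 0); rewrite !mxE.
Qed.

Lemma sum_frobenius_sq_kraus :
  \sum_k frobenius_sq (M k) * frobenius_sq (N k) = d%:R ^+ 2.
Proof.
have fM k : frobenius_sq (M k) = \tr ((A *m hadjmx A) *m (hadjmx (E k) *m E k)).
  by rewrite /M -mulmxA frobenius_sq_hadj_unitary // frobenius_sq_mulmx.
have fN k : frobenius_sq (N k) = \tr ((B *m hadjmx B) *m (hadjmx (F k) *m F k)).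
  by rewrite /N -mulmxA frobenius_sq_hadj_unitary // frobenius_sq_mulmx.
under eq_bigr => k _ do rewrite fM fN -mxtrace_tens -tensmx_mul.
rewrite -raddf_sum -mulmx_sumr kraus_complete mulmx1.
rewrite -[LHS]/(\tr ((A *m hadjmx A) *t (B *m hadjmx B))) mxtrace_tens.
by rewrite !(mxtrace_mulC _ (hadjmx _)) AA BB mxtrace1 expr2.
Qed.

(* Each term of [sum_frobenius_sq_kraus] is bounded below by Cauchy-Schwarz,
   and the bounds add up to [d%:R ^+ 2] by [kraus_prob_sum_eq1]. *)
Lemma frobenius_sq_kraus k :
  frobenius_sq (M k) * frobenius_sq (N k) = (sqrtC (p k) * d%:R) ^+ 2.
Proof.
have lb j : 0 <= frobenius_sq (M j) * frobenius_sq (N j) - (sqrtC (p j) * d%:R) ^+ 2.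
  rewrite subr_ge0; have := cauchy_schwarz_mxtrace (M j) (N j)^T.
  rewrite frobenius_sq_trmx kraus_mulmx_trmx mxtrace_scalar mulr_natr.
  by rewrite ger0_norm // mulrn_wge0 ?sqrtC_ge0.
have sum0 : \sum_j (frobenius_sq (M j) * frobenius_sq (N j)
                    - (sqrtC (p j) * d%:R) ^+ 2) = 0.
  under eq_bigr => j _ do rewrite exprMn sqrtCK.
  by rewrite sumrB sum_frobenius_sq_kraus -mulr_suml kraus_prob_sum_eq1 mul1r subrr.
have := psumr_eq0P (fun j _ => lb j) sum0 (i := k) isT.
by move/eqP; rewrite subr_eq0 => /eqP.
Qed.

End KrausOperators.

Theorem mainTheorem9 (C : numClosedFieldType) (d nA nB : nat) (K : finType)
  (hA : (d <= nA)%N) (hB : (d <= nB)%N)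
  (A : 'M[C]_(nA, d)) (B : 'M[C]_(nB, d)) (a b : 'M[C]_d)
  (E : K -> 'M[C]_(d, nA)) (F : K -> 'M[C]_(d, nB)) (p : K -> C) :
  hadjmx A *m A = 1%:M ->
  hadjmx B *m B = 1%:M ->
  hadjmx a *m a = 1%:M ->
  hadjmx b *m b = 1%:M ->
  (forall k, 0 <= p k) ->
  \sum_k ((hadjmx (E k) *m E k) *t (hadjmx (F k) *m F k)) = 1%:M ->
  (forall k, (E k *t F k) *m ent_state A B = sqrtC (p k) *: ent_state a b) ->
  forall k, p k != 0 ->
    exists (alpha : C) (U : 'M[C]_d),
      [/\ 0 < alpha, U \is unitarymx,
          hadjmx a *m E k *m A = alpha *: U &
          hadjmx b *m F k *m B = (sqrtC (p k) / alpha) *: entconjmx U].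
Proof.
(* [hA] and [hB] follow from the orthonormality of [A] and [B]. *)
move=> AA BB aa bb p_ge0 complete state k pk_neq0.
have [d0|d_gt0] := posnP d.
  subst d; exists 1, 1%:M; split; first exact: ltr01.
  - by apply/unitarymxP; apply/matrixP => -[].
  - by apply/matrixP => -[].
  - by apply/matrixP => -[].
apply: scaled_unitary_of_cauchy_schwarz_eq => //.
- by rewrite sqrtC_gt0 lt_def pk_neq0 p_ge0.
- exact: kraus_mulmx_trmx.
- exact: frobenius_sq_kraus.
Qed.
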